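(* Let $f:\mathbb{S}^3\to\mathbb{S}^3$ be a smooth map and for $g\in\mathbb{S}^3$ let $M_g:\mathrm{Im}\,\mathbb{H}\to\mathrm{Im}\,\mathbb{H}$, $M_g(x)=f_*(gx)f(g)^{-1}$. Then $M_g$ is symmetric (with respect to the Euclidean scalar product on $\mathrm{Im}\,\mathbb{H}$) for all $g\in\mathbb{S}^3$ if and only if the graph $\Gamma_{f^{-1}}=\{(g,f(g)^{-1}):g\in\mathbb{S}^3\}$ is a Lagrangian submanifold of $S^3\times S^3$ with respect to the $2$-form $\Omega$.
   Context: $S^3$ is the group of unit quaternions, with Lie algebra $\mathfrak{su}(2)\cong\mathrm{Im}\,\mathbb{H}$ and $\mathrm{T}_g S^3=g\,\mathrm{Im}\,\mathbb{H}$. Let $\langle\cdot,\cdot\rangle:=-\tfrac1{12}B$ on $\mathfrak{su}(2)$, where $B$ is the Killing form (equivalently $\langle x,y\rangle=\tfrac23\,\mathrm{Re}(x\bar y)$). The nearly Kähler structure on $S^3\times S^3$ (identified with $S^3\times S^3\times S^3/\Delta S^3$ via $(g_1,g_2,g_3)\cdot(a_1,a_2)=(g_1a_1g_3^{-1},g_2a_2g_3^{-1})$) has fundamental $2$-form given at a point $(g_1,g_2)$ on tangent vectors $(X_1,X_2),(Y_1,Y_2)$ by $\Omega((X_1,X_2),(Y_1,Y_2))=\tfrac1{\sqrt3}\big(\langle g_1^{-1}X_1,g_2^{-1}Y_2\rangle-\langle g_2^{-1}X_2,g_1^{-1}Y_1\rangle\big)$. A $3$-dimensional submanifold $L\subset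 S^3\times S^3$ is called Lagrangian if $\Omega(A,B)=0$ for all $A,B\in\mathrm{T}L$ (note $\Omega$ is not closed). *)

From Stdlib Require Import Reals.
Open Scope R_scope.

(* Quaternion q = q0 + q1 i + q2 j + q3 k *)
Record quat := Quat { q0 : R; q1 : R; q2 : R; q3 : R }.

Definition qmul (a b : quat) : quat :=
  Quat (q0 a * q0 b - q1 a * q1 b - q2 a * q2 b - q3 a * q3 b)
       (q0 a * q1 b + q1 a * q0 b + q2 a * q3 b - q3 a * q2 b)
       (q0 a * q2 b - q1 a * q3 b + q2 a * q0 b + q3 a * q1 b)
       (q0 a * q3 b + q1 a * q2 b - q2 a * q1 b + q3 a * q0 b).

Definition qconj (a : quat) : quat := Quat (q0 a) (- q1 a) (- q2 a) (- q3 a).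

Definition qdot (a b : quat) : R :=
  q0 a * q0 b + q1 a * q1 b + q2 a * q2 b + q3 a * q3 b.

Definition qscale (r : R) (a : quat) : quat := Quat (r * q0 a) (r * q1 a) (r * q2 a) (r * q3 a).

Definition qinv (a : quat) : quat := qscale (/ qdot a a) (qconj a).

Definition inS3 (g : quat) : Prop := qdot g g = 1.

Definition isIm (x : quat) : Prop := q0 x = 0.

(* the metric <x,y> = -1/12 B(x,y) = 2/3 Re(x conj y) *)
Definition ip (x y : quat) : R := 2 / 3 * qdot x y.

Definition qderiv (c : R -> quat) (t0 : R) (v : quat) : Prop :=
  derivable_pt_lim (fun t => q0 (c t)) t0 (q0 v) /\
  derivable_pt_lim (fun t => q1 (c t)) t0 (q1 v) /\
  derivable_pt_lim (fun t => q2 (c t)) t0 (q2 v) /\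
  derivable_pt_lim (fun t => q3 (c t)) t0 (q3 v).

Definition is_differential (f : quat -> quat) (Df : quat -> quat -> quat) : Prop :=
  forall (c : R -> quat) (v : quat),
    (forall t, inS3 (c t)) -> qderiv c 0 v ->
    qderiv (fun t => f (c t)) 0 (Df (c 0) v).

Definition Mg (f : quat -> quat) (Df : quat -> quat -> quat) (g x : quat) : quat :=
  qmul (Df g (qmul g x)) (qinv (f g)).

Definition symmetric_on_ImH (M : quat -> quat) : Prop :=
  forall x y, isIm x -> isIm y -> qdot (M x) y = qdot x (M y).

(* fundamental 2-form of the nearly Kaehler S^3 x S^3 at (g1,g2) *)
Definition Omega (g1 g2 X1 X2 Y1 Y2 : quat) : R :=
  / sqrt 3 * (ip (qmul (qinv g1) X1) (qmul (qinv g2) Y2)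
              - ip (qmul (qinv g2) X2) (qmul (qinv g1) Y1)).

Definition in_graph_inv (f : quat -> quat) (p1 p2 : quat) : Prop :=
  inS3 p1 /\ p2 = qinv (f p1).

Definition tangent_graph_inv (f : quat -> quat) (p1 p2 A1 A2 : quat) : Prop :=
  exists c1 c2 : R -> quat,
    (forall t, in_graph_inv f (c1 t) (c2 t)) /\
    c1 0 = p1 /\ c2 0 = p2 /\ qderiv c1 0 A1 /\ qderiv c2 0 A2.

Definition lagrangian_graph_inv (f : quat -> quat) : Prop :=
  forall p1 p2 A1 A2 B1 B2,
    in_graph_inv f p1 p2 ->
    tangent_graph_inv f p1 p2 A1 A2 ->
    tangent_graph_inv f p1 p2 B1 B2 ->
    Omega p1 p2 A1 A2 B1 B2 = 0.

(* Write a tangent vector at g as g x with x in Im H.  For unit F with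
   Re(D conj F) = 0 one has F conj D = - D conj F, so on a pair of tangent vectors
   (g x, conj (f_* (g x))), (g y, conj (f_* (g y))) of the graph at (g, f(g)^-1),
   Omega equals (2 / (3 sqrt 3)) (<M_g x, y> - <x, M_g y>).  Every vector g x is
   the velocity of a curve in S^3, so the graph is Lagrangian iff all M_g are
   symmetric. *)

From Stdlib Require Import Reals Lra Psatz FunctionalExtensionality.
From Coquelicot Require Import Coquelicot.
Open Scope R_scope.

Lemma qdot_comm a b : qdot a b = qdot b a.
Proof. unfold qdot; ring. Qed.

Lemma qconj_involutive a : qconj (qconj a) = a.
Proof. destruct a; unfold qconj; simpl; f_equal; ring. Qed.

Lemma qdot_qconj a : qdot (qconj a) (qconj a) = qdot a a.
Proof. destruct a; unfold qdot, qconj; simpl; ring. Qed.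

Lemma qinv_unit a : qdot a a = 1 -> qinv a = qconj a.
Proof.
intros Ha; unfold qinv; rewrite Ha, Rinv_1.
destruct a; unfold qscale, qconj; simpl; f_equal; ring.
Qed.

Lemma q0_qmul_qconj g a : q0 (qmul (qconj g) a) = qdot g a.
Proof. destruct g, a; unfold qdot, qmul, qconj; simpl; ring. Qed.

Lemma qmul_qconjK g a : qdot g g = 1 -> qmul (qconj g) (qmul g a) = a.
Proof.
intros Hg; destruct g as [g0 g1 g2 g3], a as [a0 a1 a2 a3].
unfold qdot, qmul, qconj in *; simpl in *.
f_equal; [transitivity ((g0*g0+g1*g1+g2*g2+g3*g3) * a0)
         |transitivity ((g0*g0+g1*g1+g2*g2+g3*g3) * a1)
         |transitivity ((g0*g0+g1*g1+g2*g2+g3*g3) * a2)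
         |transitivity ((g0*g0+g1*g1+g2*g2+g3*g3) * a3)];
  try ring; rewrite Hg; ring.
Qed.

Lemma qmul_qconjVK g a : qdot g g = 1 -> qmul g (qmul (qconj g) a) = a.
Proof.
intros Hg; rewrite <- (qconj_involutive g) at 1.
apply qmul_qconjK; rewrite qdot_qconj; exact Hg.
Qed.

(* F conj W = conj (W conj F), and conjugation negates the imaginary part. *)
Lemma qdot_qmul_qconj_swap a F W :
  qdot a (qmul F (qconj W)) = - qdot a (qmul W (qconj F)) + 2 * q0 a * qdot W F.
Proof. destruct a, F, W; unfold qdot, qmul, qconj; simpl; ring. Qed.

Lemma qderiv_unique c t0 v w : qderiv c t0 v -> qderiv c t0 w -> v = w.
Proof.
intros [A0 [A1 [A2 A3]]] [B0 [B1 [B2 B3]]].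
destruct v, w; simpl in *; f_equal; eapply uniqueness_limite; eauto.
Qed.

Lemma qderiv_qconj c t0 v :
  qderiv c t0 v -> qderiv (fun t => qconj (c t)) t0 (qconj v).
Proof.
intros [D0 [D1 [D2 D3]]]; unfold qderiv; simpl.
repeat split; auto; apply (derivable_pt_lim_opp (fun t => _ (c t))); assumption.
Qed.

Lemma qderiv_S3_orthogonal c t0 v :
  (forall t, inS3 (c t)) -> qderiv c t0 v -> qdot (c t0) v = 0.
Proof.
intros Hc [D0 [D1 [D2 D3]]].
assert (Dnorm : derivable_pt_lim (fun t => qdot (c t) (c t)) t0
                  (2 * qdot (c t0) v)).
{ pose proof (derivable_pt_lim_plus _ _ _ _ _
    (derivable_pt_lim_plus _ _ _ _ _
      (derivable_pt_lim_plus _ _ _ _ _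
        (derivable_pt_lim_mult _ _ _ _ _ D0 D0)
        (derivable_pt_lim_mult _ _ _ _ _ D1 D1))
      (derivable_pt_lim_mult _ _ _ _ _ D2 D2))
    (derivable_pt_lim_mult _ _ _ _ _ D3 D3)) as D.
  replace (2 * qdot (c t0) v) with
    ((q0 v * q0 (c t0) + q0 (c t0) * q0 v + (q1 v * q1 (c t0) + q1 (c t0) * q1 v))
     + (q2 v * q2 (c t0) + q2 (c t0) * q2 v) + (q3 v * q3 (c t0) + q3 (c t0) * q3 v))
    by (unfold qdot; ring).
  apply (derivable_pt_lim_ext _ (fun t => qdot (c t) (c t))) in D;
    [exact D|intros; reflexivity]. }
assert (Dconst : derivable_pt_lim (fun t => qdot (c t) (c t)) t0 0).
{ apply (derivable_pt_lim_ext (fct_cte 1)); [intros t; symmetry; apply Hc|].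
  apply derivable_pt_lim_const. }
pose proof (uniqueness_limite _ _ _ _ Dnorm Dconst); lra.
Qed.

(* g times the Cayley transform (1 + t x/2) / (1 - t x/2). *)
Lemma S3_curve_velocity g x : inS3 g -> isIm x ->
  exists c : R -> quat, (forall t, inS3 (c t)) /\ c 0 = g /\ qderiv c 0 (qmul g x).
Proof.
unfold inS3, isIm; intros Hg Hx.
destruct g as [g0 g1 g2 g3], x as [x0 x1 x2 x3]; simpl in Hx; subst x0.
set (K := (x1*x1 + x2*x2 + x3*x3) / 4).
assert (HK : 0 <= K) by (unfold K; nra).
set (e := fun t => Quat ((1 - K*t*t) / (1 + K*t*t)) (t*x1 / (1 + K*t*t))
                        (t*x2 / (1 + K*t*t)) (t*x3 / (1 + K*t*t))).
exists (fun t => qmul (Quat g0 g1 g2 g3) (e t)); split; [|split].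
- intros t; unfold qdot in *; simpl in *.
  assert (Hden : 0 < 1 + K*t*t) by nra.
  replace (_ + _) with ((g0*g0 + g1*g1 + g2*g2 + g3*g3) *
     (((1 - K*t*t) / (1 + K*t*t))^2 + (t*x1 / (1 + K*t*t))^2
      + (t*x2 / (1 + K*t*t))^2 + (t*x3 / (1 + K*t*t))^2)) by (simpl; ring).
  rewrite Hg, Rmult_1_l; unfold K in *; field; lra.
- unfold e, qmul; simpl; f_equal; field.
- unfold qderiv, e, qmul; simpl; repeat split; apply is_derive_Reals;
    auto_derive; try (split; [nra|auto]); try nra; field; nra.
Qed.

Lemma Omega_unit_graph g F a b DA DB :
  qdot g g = 1 -> qdot F F = 1 -> q0 a = 0 -> q0 b = 0 ->
  qdot DA F = 0 -> qdot DB F = 0 ->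
  Omega g (qinv F) (qmul g a) (qconj DA) (qmul g b) (qconj DB) =
  / sqrt 3 * (2 / 3) * (qdot (qmul DA (qconj F)) b - qdot a (qmul DB (qconj F))).
Proof.
intros Hg HF Ha Hb HA HB; unfold Omega, ip.
rewrite (qinv_unit g Hg), (qinv_unit F HF), qinv_unit by (rewrite qdot_qconj; auto).
rewrite qconj_involutive, !qmul_qconjK by exact Hg.
rewrite (qdot_comm (qmul F (qconj DA))), (qdot_qmul_qconj_swap a), (qdot_qmul_qconj_swap b), Ha, Hb, HA, HB.
rewrite (qdot_comm b); ring.
Qed.

Section Graph.

Variables (f : quat -> quat) (Df : quat -> quat -> quat).
Hypothesis hS3 : forall g, inS3 g -> inS3 (f g).
Hypothesis hDf : is_differential f Df.

Lemma qderiv_graph_inv c v : (forall t, inS3 (c t)) -> qderiv c 0 v ->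
  qderiv (fun t => qinv (f (c t))) 0 (qconj (Df (c 0) v)).
Proof.
intros Hc Dc.
replace (fun t => qinv (f (c t))) with (fun t => qconj (f (c t))).
- exact (qderiv_qconj _ _ _ (hDf c v Hc Dc)).
- apply functional_extensionality; intros t; symmetry; apply qinv_unit, hS3, Hc.
Qed.

Lemma Df_orthogonal g x : inS3 g -> isIm x -> qdot (Df g (qmul g x)) (f g) = 0.
Proof.
intros Hg Hx; destruct (S3_curve_velocity g x Hg Hx) as [c [Hc [<- Dc]]].
rewrite qdot_comm.
apply (qderiv_S3_orthogonal (fun t => f (c t))); [intros t; apply hS3, Hc|].
exact (hDf c _ Hc Dc).
Qed.

Lemma tangent_graph_invE p1 p2 A1 A2 : tangent_graph_inv f p1 p2 A1 A2 ->
  A2 = qconj (Df p1 A1) /\ qdot p1 A1 = 0.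
Proof.
intros [c1 [c2 [Hc [<- [<- [D1 D2]]]]]].
assert (Hc1 : forall t, inS3 (c1 t)) by (intros t; apply Hc).
replace c2 with (fun t => qinv (f (c1 t))) in D2
  by (apply functional_extensionality; intros t; symmetry; apply Hc).
split.
- exact (qderiv_unique _ _ _ _ D2 (qderiv_graph_inv c1 A1 Hc1 D1)).
- exact (qderiv_S3_orthogonal c1 0 A1 Hc1 D1).
Qed.

Lemma tangent_graph_inv_intro g x : inS3 g -> isIm x ->
  tangent_graph_inv f g (qinv (f g)) (qmul g x) (qconj (Df g (qmul g x))).
Proof.
intros Hg Hx; destruct (S3_curve_velocity g x Hg Hx) as [c [Hc [<- Dc]]].
exists c, (fun t => qinv (f (c t))).
refine (conj _ (conj eq_refl (conj eq_refl (conj Dc (qderiv_graph_inv c _ Hc Dc))))).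
intros t; split; [apply Hc|reflexivity].
Qed.

Lemma Omega_graph_inv g x y : inS3 g -> isIm x -> isIm y ->
  Omega g (qinv (f g)) (qmul g x) (qconj (Df g (qmul g x)))
                       (qmul g y) (qconj (Df g (qmul g y))) =
  / sqrt 3 * (2 / 3) * (qdot (Mg f Df g x) y - qdot x (Mg f Df g y)).
Proof.
intros Hg Hx Hy.
rewrite Omega_unit_graph by (try apply hS3; try apply Df_orthogonal; auto).
unfold Mg; rewrite qinv_unit by (apply hS3, Hg); reflexivity.
Qed.

End Graph.

Lemma Omega_scale_neq0 : / sqrt 3 * (2 / 3) <> 0.
Proof.
assert (0 < sqrt 3) by (apply sqrt_lt_R0; lra).
apply Rmult_integral_contrapositive; split; [apply Rinv_neq_0_compat|]; lra.
Qed.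

Theorem lemma4p1 (f : quat -> quat) (Df : quat -> quat -> quat)
  (hS3 : forall g, inS3 g -> inS3 (f g))
  (hDf : is_differential f Df) :
  (forall g, inS3 g -> symmetric_on_ImH (Mg f Df g)) <-> lagrangian_graph_inv f.
Proof.
split.
- intros Hsym p1 p2 A1 A2 B1 B2 [Hp1 ->] TA TB.
  destruct (tangent_graph_invE f Df hS3 hDf _ _ _ _ TA) as [-> HA].
  destruct (tangent_graph_invE f Df hS3 hDf _ _ _ _ TB) as [-> HB].
  assert (IA : isIm (qmul (qconj p1) A1)) by (unfold isIm; rewrite q0_qmul_qconj; exact HA).
  assert (IB : isIm (qmul (qconj p1) B1)) by (unfold isIm; rewrite q0_qmul_qconj; exact HB).
  rewrite <- (qmul_qconjVK p1 A1 Hp1), <- (qmul_qconjVK p1 B1 Hp1).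
  rewrite Omega_graph_inv, Hsym by auto; ring.
- intros HL g Hg x y Hx Hy.
  pose proof (HL _ _ _ _ _ _ (conj Hg eq_refl)
    (tangent_graph_inv_intro f Df hS3 hDf g x Hg Hx)
    (tangent_graph_inv_intro f Df hS3 hDf g y Hg Hy)) as HO.
  rewrite Omega_graph_inv in HO by auto.
  apply Rmult_integral in HO; destruct HO as [HO|HO];
    [exfalso; exact (Omega_scale_neq0 HO)|lra].
Qed.
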